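(* For $u\ge0$ define $$\underline{\hat\kappa}^{VG}_{\tilde A}(u)=-\tilde A\tilde mu+\frac{e}{\eta}\Big[-\frac{e^{\tilde Au}\tilde Au}{C+D+2}\Big(\frac{1}{\tilde Au}\wedge1\Big)^{C+D+2}+\frac{e^{\tilde Au}}{C+D+1}\Big(\frac{1}{\tilde Au}\wedge1\Big)^{C+D+1}+\frac{\tilde Au}{C+D+2}-\frac{1+\tilde Au}{C+D+1}\Big],$$ which for $u\ge1/\tilde A$ equals $$-\tilde A\tilde mu+\frac{e}{\eta}\Big[\Big(\frac{1}{\tilde Au}\Big)^{C+D+1}e^{\tilde Au}\Big(\frac{1}{C+D+1}-\frac{1}{C+D+2}\Big)+\frac{\tilde Au}{C+D+2}-\frac{1+\tilde Au}{C+D+1}\Big].$$ Then $\hat\kappa^{VG}_{\tilde A}(u)\ge\underline{\hat\kappa}^{VG}_{\tilde A}(u)$ for all $u\ge0$.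
   Context: Variance-gamma setup: constants $\theta\in\mathbb R$, $\rho>0$, $\eta>0$; $C=\theta/\rho^2$, $D=\sqrt{\theta^2+2\rho^2/\eta}/\rho^2$ (so $C+D>0$), and assume $D-C>2$. Let $\tilde\kappa(x)=-\frac1\eta\ln\big(1-\frac{x^2\rho^2\eta}{2}-\theta\eta x\big)$ (the cumulant generating function of the VG process $\theta\tau_t+\rho W_{\tau_t}$ at time 1, $\tau$ a gamma subordinator with $\tau_t\sim\Gamma(t/\eta,1/\eta)$), and $\tilde m=\tilde\kappa(1)$. Let $\hat\nu$ be the measure on $(-1,\infty)\setminus\{0\}$ given by $\hat\nu(dx)=\frac{-1}{\eta\ln(x+1)}(x+1)^{C+D-1}\,dx$ for $x\in(-1,0)$ and $\hat\nu(dx)=\frac{1}{\eta\ln(x+1)}(x+1)^{C-D-1}\,dx$ for $x\in(0,\infty)$. For constants $A>0$, $\tilde s>0$, $\tilde A=A\tilde s$, define for $u\ge0$ $$\hat\kappa^{VG}_{\tilde A}(u)=-\tilde A\tilde mu+\int_{-1}^\infty\big(e^{-\tilde Aux}-1+\tilde Aux\big)\,\hat\nu(dx).$$ Here $a\wedge b=\min(a,b)$, with the convention $1/(\tilde A\cdot 0)\wedge 1=1$. *)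

From Stdlib Require Import Reals Lra.
Open Scope R_scope.

Definition VG_C (theta rho : R) : R := theta / rho ^ 2.
Definition VG_D (theta rho eta : R) : R :=
  sqrt (theta ^ 2 + 2 * rho ^ 2 / eta) / rho ^ 2.

(* cumulant generating function of the VG process at time 1 *)
Definition kappa_tilde (theta rho eta x : R) : R :=
  - / eta * ln (1 - x ^ 2 * rho ^ 2 * eta / 2 - theta * eta * x).

Definition m_tilde (theta rho eta : R) : R := kappa_tilde theta rho eta 1.

(* density of the measure nu-hat on (-1,oo)\{0} w.r.t. Lebesgue measure;
   the value at x = 0 is irrelevant (a null set). *)
Definition nu_hat_density (theta rho eta x : R) : R :=
  let C := VG_C theta rho in
  let D := VG_D theta rho eta in
  if Rlt_dec x 0
  then - / (eta * ln (x + 1)) * Rpower (x + 1) (C + D - 1)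
  else / (eta * ln (x + 1)) * Rpower (x + 1) (C - D - 1).

Definition kappa_hat_integrand (theta rho eta At u x : R) : R :=
  (exp (- At * u * x) - 1 + At * u * x) * nu_hat_density theta rho eta x.

Definition improper_integral_m1_infty (f : R -> R) (I : R) : Prop :=
  (forall a b, -1 < a -> a < b -> inhabited (Riemann_integrable f a b)) /\
  forall eps, 0 < eps ->
    exists a0 b0, -1 < a0 /\ a0 < b0 /\
      forall a b (pr : Riemann_integrable f a b),
        -1 < a -> a < a0 -> b0 < b -> Rabs (RiemannInt pr - I) < eps.

Definition kappa_hat_VG_is (theta rho eta At u K : R) : Prop :=
  exists I, improper_integral_m1_infty (kappa_hat_integrand theta rho eta At u) I
            /\ K = - At * m_tilde theta rho eta * u + I.

(* (1/(At u)) /\ 1, with the convention 1/(At*0) /\ 1 = 1 *)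
Definition min_inv (At u : R) : R :=
  if Req_EM_T u 0 then 1 else Rmin (/ (At * u)) 1.

Definition kappa_hat_VG_lower (theta rho eta At u : R) : R :=
  let C := VG_C theta rho in
  let D := VG_D theta rho eta in
  let w := min_inv At u in
  - At * m_tilde theta rho eta * u
  + exp 1 / eta *
    ( - exp (At * u) * (At * u) / (C + D + 2) * Rpower w (C + D + 2)
      + exp (At * u) / (C + D + 1) * Rpower w (C + D + 1)
      + At * u / (C + D + 2)
      - (1 + At * u) / (C + D + 1) ).

(* Write c = At u, k = C + D > 0, q = C - D < -1 and t = x + 1.  The integrand is
   nonnegative and continuous on (-1, oo) (near 0 it is O(|x|)), and it is dominated by a
   multiple of t ^ (k - 1) on (-1, 0] and of t ^ q on [0, oo); so its integrals over
   compact intervals are uniformly bounded and the improper integral exists as their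
   supremum.  For the lower bound only (-1, 0] is kept: there 1 / (- ln t) >= e t, so the
   integrand is at least (e / eta) t ^ k (exp (c (1 - t)) - 1 - c (1 - t)); bounding
   exp (- c t) below by its tangent 1 - c t for t < w = min (1 / c) 1 and by 0 beyond,
   and integrating the resulting polynomial times t ^ k, gives the claimed bound. *)

From Stdlib Require Import Reals Lra Classical FunctionalExtensionality.
From Coquelicot Require Import Coquelicot.
Open Scope R_scope.

Lemma exp_le x y : x <= y -> exp x <= exp y.
Proof. intros [Hlt | ->]; [left; apply exp_increasing | right]; auto. Qed.

Lemma exp_sub1_le y : exp y - 1 <= y * exp y.
Proof.
  assert (Hinv : exp y * exp (- y) = 1) by (rewrite <- exp_plus, Rplus_opp_r, exp_0; reflexivity).
  generalize (exp_ineq1_le (- y)) (exp_pos y); nra.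
Qed.

Lemma ln_le_sub1 t : 0 < t -> ln t <= t - 1.
Proof. intros Ht. generalize (exp_ineq1_le (ln t)); rewrite exp_ln; lra. Qed.

Lemma sub_inv_le_ln t : 0 < t -> 1 - / t <= ln t.
Proof.
  intros Ht. generalize (ln_le_sub1 (/ t) (Rinv_0_lt_compat _ Ht)).
  rewrite ln_Rinv; lra.
Qed.

Lemma ln_lt0 t : 0 < t < 1 -> ln t < 0.
Proof. intros Ht. rewrite <- ln_1. apply ln_increasing; lra. Qed.

Lemma ln_gt0 t : 1 < t -> 0 < ln t.
Proof. intros Ht. rewrite <- ln_1. apply ln_increasing; lra. Qed.

(* [s <= exp (s - 1)] with [s = - ln t]. *)
Lemma exp1_mul_neg_ln_le1 t : 0 < t -> exp 1 * t * - ln t <= 1.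
Proof.
  intros Ht. set (s := - ln t).
  replace t with (exp (- s)) at 1 by (unfold s; rewrite Ropp_involutive, exp_ln; auto).
  rewrite <- exp_plus.
  assert (Hinv : exp (1 + - s) * exp (s - 1) = 1)
    by (rewrite <- exp_plus; replace (1 + - s + (s - 1)) with 0 by ring; apply exp_0).
  generalize (exp_ineq1_le (s - 1)) (exp_pos (1 + - s)); nra.
Qed.

Lemma Rpower_gt0 t p : 0 < Rpower t p.
Proof. apply exp_pos. Qed.

Lemma Rpower_base1 p : Rpower 1 p = 1.
Proof. unfold Rpower. rewrite ln_1, Rmult_0_r. apply exp_0. Qed.

Lemma Rpower_add1 t p : 0 < t -> Rpower t (p + 1) = Rpower t p * t.
Proof. intros Ht. rewrite Rpower_plus, Rpower_1; auto. Qed.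

Lemma Rpower_le1 t p : 0 < t <= 1 -> 0 <= p -> Rpower t p <= 1.
Proof. intros Ht Hp. rewrite <- (Rpower_base1 p). apply Rle_Rpower_l; lra. Qed.

Definition compensated_exp (c x : R) : R := exp (- (c * x)) - 1 + c * x.

Lemma compensated_exp_ge0 c x : 0 <= compensated_exp c x.
Proof. unfold compensated_exp. generalize (exp_ineq1_le (- (c * x))); lra. Qed.

Lemma compensated_exp_0 c : compensated_exp c 0 = 0.
Proof. unfold compensated_exp. rewrite Rmult_0_r, Ropp_0, exp_0; ring. Qed.

Lemma compensated_exp_le_lin c x : 0 <= c -> -1 <= x ->
  compensated_exp c x <= c * exp c * Rabs x.
Proof.
  intros Hc Hx. unfold compensated_exp. destruct (Rle_lt_dec x 0) as [Hx0 | Hx0].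
  - rewrite Rabs_left1 by lra. set (y := - (c * x)).
    assert (Hy : 0 <= y <= c) by (unfold y; nra).
    generalize (exp_sub1_le y) (exp_le _ _ (proj2 Hy)).
    replace (c * x) with (- y) by (unfold y; ring). unfold y in *; nra.
  - rewrite Rabs_right by lra.
    assert (Hexp : exp (- (c * x)) <= 1) by (rewrite <- exp_0; apply exp_le; nra).
    assert (Hcx : 0 <= c * x) by nra.
    assert (Hec : 1 <= exp c) by (generalize (exp_ineq1_le c); lra).
    nra.
Qed.

Lemma compensated_exp_le_sq c x : 0 <= c -> -1 <= x ->
  compensated_exp c x <= c ^ 2 * exp c * x ^ 2.
Proof.
  intros Hc Hx. unfold compensated_exp. destruct (Rle_lt_dec x 0) as [Hx0 | Hx0].
  - set (y := - (c * x)).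
    assert (Hy : 0 <= y <= c) by (unfold y; nra).
    replace (c ^ 2 * exp c * x ^ 2) with (exp c * y ^ 2) by (unfold y; ring).
    replace (c * x) with (- y) by (unfold y; ring).
    assert (H1 : y * (exp y - 1) <= y * (y * exp y))
      by (apply Rmult_le_compat_l; [lra | apply exp_sub1_le]).
    assert (H2 : y * y * exp y <= y * y * exp c)
      by (apply Rmult_le_compat_l; [nra | apply exp_le; lra]).
    generalize (exp_sub1_le y); nra.
  - set (z := c * x).
    assert (Hz : 0 <= z) by (unfold z; nra).
    replace (c ^ 2 * exp c * x ^ 2) with (exp c * z ^ 2) by (unfold z; ring).
    assert (Hinv : exp (- z) * exp z = 1) by (rewrite <- exp_plus, Rplus_opp_l, exp_0; reflexivity).
    assert (H1 : exp (- z) * (1 + z) <= 1)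
      by (generalize (exp_ineq1_le z) (exp_pos (- z)); nra).
    assert (H2 : z * (1 - exp (- z)) <= z * z)
      by (apply Rmult_le_compat_l; [lra | generalize (exp_ineq1_le (- z)); lra]).
    assert (H3 : z * z <= exp c * z ^ 2) by (generalize (exp_ineq1_le c); nra).
    nra.
Qed.

Lemma compensated_exp_ge_affine c t :
  exp c * (1 - c * t) - 1 - c + c * t <= compensated_exp c (t - 1).
Proof.
  unfold compensated_exp. replace (- (c * (t - 1))) with (c + - (c * t)) by ring.
  rewrite exp_plus. generalize (exp_ineq1_le (- (c * t))) (exp_pos c); nra.
Qed.

Section NonnegImproperIntegral.
Variable f : R -> R.
Hypothesis f_ex_RInt : forall a b, -1 < a -> -1 < b -> ex_RInt f a b.
Hypothesis f_ge0 : forall x, -1 < x -> 0 <= f x.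

Lemma RInt_ge0_subinterval a a' b' b : -1 < a -> a <= a' -> a' <= b' -> b' <= b ->
  RInt f a' b' <= RInt f a b.
Proof.
  intros Ha Ha' Hab' Hb'.
  assert (Hpos : forall x y, -1 < x -> x <= y -> 0 <= RInt f x y).
  { intros x y Hx Hxy. apply RInt_ge_0; auto. apply f_ex_RInt; lra.
    intros z Hz. apply f_ge0; lra. }
  rewrite <- (RInt_Chasles f a a' b) by (apply f_ex_RInt; lra).
  rewrite <- (RInt_Chasles f a' b' b) by (apply f_ex_RInt; lra).
  generalize (Hpos a a') (Hpos b' b). unfold plus; simpl. lra.
Qed.

(* With nonnegative [f] the integrals over [[a, b]] grow as the interval grows,
   so the improper integral is their supremum. *)
Lemma improper_integral_m1_infty_sup M :
  (forall a b, -1 < a -> a < b -> RInt f a b <= M) ->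
  exists I, improper_integral_m1_infty f I /\
            forall a b, -1 < a -> a < b -> RInt f a b <= I.
Proof.
  intros HM.
  set (E := fun r => exists a b, -1 < a < b /\ r = RInt f a b).
  assert (Hbound : bound E) by (exists M; intros r (a & b & Hab & ->); apply HM; lra).
  assert (Hne : exists r, E r) by (exists (RInt f 0 1), 0, 1; split; [lra | reflexivity]).
  destruct (completeness E Hbound Hne) as [I [HIub HIleast]].
  assert (HI : forall a b, -1 < a -> a < b -> RInt f a b <= I)
    by (intros a b Ha Hab; apply HIub; exists a, b; split; [lra | reflexivity]).
  exists I. split; [split | exact HI].
  - intros a b Ha Hab. constructor. apply ex_RInt_Reals_0, f_ex_RInt; lra.
  - intros eps Heps.
    destruct (classic (exists r, E r /\ I - eps < r))
      as [[r [(a0 & b0 & Hab0 & ->) Hr]] | Hnone].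
    + exists a0, b0. split; [lra | split; [lra |]].
      intros a b pr Ha Ha0 Hb0. rewrite <- RInt_Reals.
      assert (RInt f a0 b0 <= RInt f a b) by (apply RInt_ge0_subinterval; lra).
      assert (RInt f a b <= I) by (apply HI; lra).
      apply Rabs_def1; lra.
    + exfalso. assert (I <= I - eps); [| lra].
      apply HIleast. intros r Hr. apply Rnot_lt_le. intros Hlt. apply Hnone; eauto.
Qed.
End NonnegImproperIntegral.

Lemma is_RInt_shifted_power p a b : -1 < a -> -1 < b -> p + 1 <> 0 ->
  is_RInt (fun x => Rpower (x + 1) p) a b
    ((Rpower (b + 1) (p + 1) - Rpower (a + 1) (p + 1)) / (p + 1)).
Proof.
  intros Ha Hb Hp.
  assert (Hdom : forall x, Rmin a b <= x -> -1 < x)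
    by (intros x Hx; apply Rlt_le_trans with (Rmin a b); auto; apply Rmin_glb_lt; auto).
  replace ((Rpower (b + 1) (p + 1) - Rpower (a + 1) (p + 1)) / (p + 1))
    with (minus (Rpower (b + 1) (p + 1) / (p + 1)) (Rpower (a + 1) (p + 1) / (p + 1)))
    by (unfold minus, plus, opp; simpl; field; auto).
  apply (is_RInt_derive (fun x => Rpower (x + 1) (p + 1) / (p + 1))).
  - intros x [Hx _]. specialize (Hdom x Hx). unfold Rpower. auto_derive; [lra |].
    replace ((p + 1) * ln (x + 1)) with (p * ln (x + 1) + ln (x + 1)) by ring.
    rewrite exp_plus, exp_ln by lra. field; split; lra.
  - intros x [Hx _]. specialize (Hdom x Hx).
    apply (ex_derive_continuous (K := R_AbsRing) (V := R_NormedModule)).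
    unfold Rpower. auto_derive. lra.
Qed.

Lemma RInt_le_shifted_power f K p a b : -1 < a <= b -> p + 1 <> 0 -> ex_RInt f a b ->
  (forall x, a < x < b -> f x <= K * Rpower (x + 1) p) ->
  RInt f a b <= K * ((Rpower (b + 1) (p + 1) - Rpower (a + 1) (p + 1)) / (p + 1)).
Proof.
  intros Hab Hp Hf Hle.
  assert (Hpow : is_RInt (fun x => K * Rpower (x + 1) p) a b
                   (K * ((Rpower (b + 1) (p + 1) - Rpower (a + 1) (p + 1)) / (p + 1))))
    by (apply (is_RInt_scal (V := R_NormedModule)), is_RInt_shifted_power; lra).
  rewrite <- (is_RInt_unique _ _ _ _ Hpow).
  apply RInt_le; [lra | exact Hf | eexists; exact Hpow | exact Hle].
Qed.

Lemma RInt_ge_shifted_power2 f al be k a b : -1 < a <= b -> -1 < k -> ex_RInt f a b ->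
  (forall x, a < x < b -> al * Rpower (x + 1) k + be * Rpower (x + 1) (k + 1) <= f x) ->
  al * ((Rpower (b + 1) (k + 1) - Rpower (a + 1) (k + 1)) / (k + 1))
  + be * ((Rpower (b + 1) (k + 2) - Rpower (a + 1) (k + 2)) / (k + 2)) <= RInt f a b.
Proof.
  intros Hab Hk Hf Hge.
  replace (k + 2) with (k + 1 + 1) by ring.
  assert (Hpow : is_RInt (fun x => al * Rpower (x + 1) k + be * Rpower (x + 1) (k + 1)) a b
    (al * ((Rpower (b + 1) (k + 1) - Rpower (a + 1) (k + 1)) / (k + 1))
     + be * ((Rpower (b + 1) (k + 1 + 1) - Rpower (a + 1) (k + 1 + 1)) / (k + 1 + 1)))).
  { apply (is_RInt_plus (V := R_NormedModule));
      apply (is_RInt_scal (V := R_NormedModule)), is_RInt_shifted_power; lra. }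
  rewrite <- (is_RInt_unique _ _ _ _ Hpow).
  apply RInt_le; [lra | eexists; exact Hpow | exact Hf | exact Hge].
Qed.

(* The density of [nu_hat] with exponents [k = C + D] and [q = C - D]. *)
Definition vg_density (k q eta x : R) : R :=
  if Rlt_dec x 0
  then - / (eta * ln (x + 1)) * Rpower (x + 1) (k - 1)
  else / (eta * ln (x + 1)) * Rpower (x + 1) (q - 1).

Definition vg_integrand (c k q eta x : R) : R := compensated_exp c x * vg_density k q eta x.

Lemma kappa_hat_integrand_eq theta rho eta At u :
  kappa_hat_integrand theta rho eta At u =
  vg_integrand (At * u) (VG_C theta rho + VG_D theta rho eta)
               (VG_C theta rho - VG_D theta rho eta) eta.
Proof.
  apply functional_extensionality. intros x.
  unfold kappa_hat_integrand, vg_integrand, compensated_exp.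
  replace (- At * u * x) with (- (At * u * x)) by ring. reflexivity.
Qed.

Lemma vg_density_neg k q eta x : -1 < x < 0 ->
  vg_density k q eta x = Rpower (x + 1) (k - 1) / (eta * - ln (x + 1)).
Proof.
  intros Hx. unfold vg_density. destruct (Rlt_dec x 0); [| lra].
  assert (ln (x + 1) < 0) by (apply ln_lt0; lra).
  unfold Rdiv. rewrite <- Ropp_mult_distr_r, Rinv_opp. ring.
Qed.

Lemma vg_density_pos k q eta x : 0 < x ->
  vg_density k q eta x = Rpower (x + 1) (q - 1) / (eta * ln (x + 1)).
Proof.
  intros Hx. unfold vg_density. destruct (Rlt_dec x 0); [lra |].
  unfold Rdiv. ring.
Qed.

(* [exp 1 / eta] times the integral over [0 < t < 1] of [t ^ k * (- 1 - c + c t)] plus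
   the integral over [0 < t < w] of [t ^ k * exp c * (1 - c t)]. *)
Definition vg_lower_bound (c k eta w : R) : R :=
  exp 1 / eta *
  ( - exp c * c / (k + 2) * Rpower w (k + 2) + exp c / (k + 1) * Rpower w (k + 1)
    + c / (k + 2) - (1 + c) / (k + 1) ).

Section VGIntegrand.
Variables c k q eta : R.
Hypothesis c_ge0 : 0 <= c.
Hypothesis eta_gt0 : 0 < eta.
Hypothesis k_gt0 : 0 < k.
Hypothesis q_lt_m1 : q < -1.

Local Notation F := (vg_integrand c k q eta).

Let lin_coef_ge0 : 0 <= c * exp c / eta.
Proof.
  apply Rmult_le_pos; [generalize (exp_pos c); nra | left; apply Rinv_0_lt_compat; lra].
Qed.

Lemma vg_integrand_0 : F 0 = 0.
Proof. unfold vg_integrand. rewrite compensated_exp_0; ring. Qed.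

Lemma vg_integrand_ge0 x : -1 < x -> 0 <= F x.
Proof.
  intros Hx. destruct (Rtotal_order x 0) as [Hneg | [-> | Hpos]].
  2: rewrite vg_integrand_0; lra.
  all: unfold vg_integrand; apply Rmult_le_pos; [apply compensated_exp_ge0 |].
  - rewrite vg_density_neg by lra.
    assert (ln (x + 1) < 0) by (apply ln_lt0; lra).
    apply Rdiv_le_0_compat; [left; apply Rpower_gt0 | nra].
  - rewrite vg_density_pos by lra.
    assert (0 < ln (x + 1)) by (apply ln_gt0; lra).
    apply Rdiv_le_0_compat; [left; apply Rpower_gt0 | nra].
Qed.

(* [- ln (1 + x) >= - x] on the left of 0 and [ln (1 + x) >= x / (1 + x)] on the right. *)
Lemma vg_integrand_le_neg x : -1 < x < 0 ->
  F x <= compensated_exp c x * Rpower (x + 1) (k - 1) / (eta * - x).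
Proof.
  intros Hx. unfold vg_integrand. rewrite vg_density_neg by lra.
  assert (Hln : - x <= - ln (x + 1)) by (generalize (ln_le_sub1 (x + 1)); lra).
  unfold Rdiv. rewrite <- Rmult_assoc. apply Rmult_le_compat_l.
  - apply Rmult_le_pos; [apply compensated_exp_ge0 | left; apply Rpower_gt0].
  - apply Rinv_le_contravar; nra.
Qed.

Lemma vg_integrand_le_pos x : 0 < x ->
  F x <= compensated_exp c x * Rpower (x + 1) q / (eta * x).
Proof.
  intros Hx. unfold vg_integrand. rewrite vg_density_pos by lra.
  assert (Hln : x <= ln (x + 1) * (x + 1)).
  { generalize (sub_inv_le_ln (x + 1) ltac:(lra)). intros H.
    replace x with ((1 - / (x + 1)) * (x + 1)) at 1 by (field; lra).
    apply Rmult_le_compat_r; lra. }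
  replace q with (q - 1 + 1) at 2 by ring. rewrite Rpower_add1 by lra.
  replace (compensated_exp c x * (Rpower (x + 1) (q - 1) * (x + 1)) / (eta * x))
    with (compensated_exp c x * Rpower (x + 1) (q - 1) * / (eta * x / (x + 1)))
    by (field; lra).
  unfold Rdiv. rewrite <- Rmult_assoc. apply Rmult_le_compat_l.
  - apply Rmult_le_pos; [apply compensated_exp_ge0 | left; apply Rpower_gt0].
  - apply Rinv_le_contravar.
    + apply Rmult_lt_0_compat; [nra | apply Rinv_0_lt_compat; lra].
    + apply Rmult_le_reg_r with (x + 1); [lra |].
      rewrite Rmult_assoc, Rinv_l by lra. nra.
Qed.

(* [1 / (- ln t) >= exp 1 * t]. *)
Lemma vg_integrand_ge_neg x : -1 < x <= 0 ->
  exp 1 / eta * compensated_exp c x * Rpower (x + 1) k <= F x.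
Proof.
  intros Hx. destruct (Req_dec x 0) as [-> | Hx0].
  { rewrite vg_integrand_0, compensated_exp_0. lra. }
  unfold vg_integrand. rewrite vg_density_neg by lra.
  assert (Hln : ln (x + 1) < 0) by (apply ln_lt0; lra).
  assert (Hbound : exp 1 * (x + 1) <= / - ln (x + 1)).
  { apply Rmult_le_reg_r with (- ln (x + 1)); [lra |].
    rewrite Rinv_l by lra. apply exp1_mul_neg_ln_le1. lra. }
  replace k with (k - 1 + 1) at 1 by ring. rewrite Rpower_add1 by lra.
  replace (exp 1 / eta * compensated_exp c x * (Rpower (x + 1) (k - 1) * (x + 1)))
    with (compensated_exp c x * Rpower (x + 1) (k - 1) * / eta * (exp 1 * (x + 1)))
    by (field; lra).
  replace (compensated_exp c x * (Rpower (x + 1) (k - 1) / (eta * - ln (x + 1))))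
    with (compensated_exp c x * Rpower (x + 1) (k - 1) * / eta * / - ln (x + 1))
    by (field; lra).
  apply Rmult_le_compat_l; [| exact Hbound].
  apply Rmult_le_pos; [apply Rmult_le_pos |].
  - apply compensated_exp_ge0.
  - left; apply Rpower_gt0.
  - left; apply Rinv_0_lt_compat; lra.
Qed.

Lemma vg_integrand_le_lin_neg x : -1 < x <= 0 ->
  F x <= c * exp c / eta * Rpower (x + 1) (k - 1).
Proof.
  intros Hx. destruct (Req_dec x 0) as [-> | Hx0].
  { rewrite vg_integrand_0. apply Rmult_le_pos; [exact lin_coef_ge0 | left; apply Rpower_gt0]. }
  eapply Rle_trans; [apply vg_integrand_le_neg; lra |].
  generalize (compensated_exp_le_lin c x c_ge0 ltac:(lra)). rewrite Rabs_left by lra. intros Hg.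
  replace (c * exp c / eta * Rpower (x + 1) (k - 1))
    with (c * exp c * - x * Rpower (x + 1) (k - 1) / (eta * - x)) by (field; lra).
  unfold Rdiv. apply Rmult_le_compat_r; [left; apply Rinv_0_lt_compat; nra |].
  apply Rmult_le_compat_r; [left; apply Rpower_gt0 | exact Hg].
Qed.

Lemma vg_integrand_le_lin_pos x : 0 <= x ->
  F x <= c * exp c / eta * Rpower (x + 1) q.
Proof.
  intros Hx. destruct (Req_dec x 0) as [-> | Hx0].
  { rewrite vg_integrand_0. apply Rmult_le_pos; [exact lin_coef_ge0 | left; apply Rpower_gt0]. }
  eapply Rle_trans; [apply vg_integrand_le_pos; lra |].
  generalize (compensated_exp_le_lin c x c_ge0 ltac:(lra)). rewrite Rabs_right by lra. intros Hg.
  replace (c * exp c / eta * Rpower (x + 1) q)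
    with (c * exp c * x * Rpower (x + 1) q / (eta * x)) by (field; lra).
  unfold Rdiv. apply Rmult_le_compat_r; [left; apply Rinv_0_lt_compat; nra |].
  apply Rmult_le_compat_r; [left; apply Rpower_gt0 | exact Hg].
Qed.

Lemma vg_integrand_le_near0 x : -1/2 <= x ->
  F x <= 2 * c ^ 2 * exp c / eta * Rabs x.
Proof.
  intros Hx. destruct (Rtotal_order x 0) as [Hneg | [-> | Hpos]].
  - eapply Rle_trans; [apply vg_integrand_le_neg; lra |].
    generalize (compensated_exp_le_sq c x c_ge0 ltac:(lra)). intros Hg.
    assert (Hpow : Rpower (x + 1) (k - 1) <= 2).
    { assert (Rpower (x + 1) (k - 1) * (x + 1) <= 1)
        by (rewrite <- Rpower_add1 by lra; apply Rpower_le1; lra).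
      generalize (Rpower_gt0 (x + 1) (k - 1)); nra. }
    rewrite Rabs_left by lra.
    replace (2 * c ^ 2 * exp c / eta * - x) with (c ^ 2 * exp c * x ^ 2 * 2 / (eta * - x))
      by (field; lra).
    unfold Rdiv. apply Rmult_le_compat_r; [left; apply Rinv_0_lt_compat; nra |].
    apply Rmult_le_compat; [apply compensated_exp_ge0 | left; apply Rpower_gt0 | exact Hg | exact Hpow].
  - rewrite vg_integrand_0, Rabs_R0, Rmult_0_r. lra.
  - eapply Rle_trans; [apply vg_integrand_le_pos; lra |].
    generalize (compensated_exp_le_sq c x c_ge0 ltac:(lra)). intros Hg.
    assert (Hpow : Rpower (x + 1) q <= 1)
      by (apply Rle_trans with (Rpower (x + 1) 0);
          [apply Rle_Rpower; lra | rewrite Rpower_O; lra]).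
    rewrite Rabs_right by lra.
    replace (2 * c ^ 2 * exp c / eta * x) with (c ^ 2 * exp c * x ^ 2 * 2 / (eta * x))
      by (field; lra).
    unfold Rdiv. apply Rmult_le_compat_r; [left; apply Rinv_0_lt_compat; nra |].
    apply Rmult_le_compat; [apply compensated_exp_ge0 | left; apply Rpower_gt0 | exact Hg | lra].
Qed.

Lemma vg_integrand_continuous x : -1 < x -> continuous F x.
Proof.
  intros Hx. destruct (Rtotal_order x 0) as [Hneg | [-> | Hpos]].
  - apply continuous_ext_loc
      with (fun y => compensated_exp c y * (- / (eta * ln (y + 1)) * Rpower (y + 1) (k - 1))).
    + apply (locally_interval _ x (-1) 0); simpl; try lra.
      intros y Hy1 Hy2. unfold vg_integrand, vg_density.
      destruct (Rlt_dec y 0); [reflexivity | lra].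
    + assert (ln (x + 1) < 0) by (apply ln_lt0; lra).
      apply (ex_derive_continuous (K := R_AbsRing) (V := R_NormedModule)).
      unfold compensated_exp, Rpower. auto_derive. repeat split; try lra. nra.
  - assert (Hlin : continuous (fun y => 2 * c ^ 2 * exp c / eta * Rabs y) 0)
      by (apply (continuous_mult (fun _ => _) Rabs); [apply continuous_const | apply continuous_Rabs]).
    unfold continuous in *. rewrite Rabs_R0, Rmult_0_r in Hlin. rewrite vg_integrand_0.
    apply (filterlim_le_le (fun _ => 0) F (fun y => 2 * c ^ 2 * exp c / eta * Rabs y) 0);
      [| apply filterlim_const | exact Hlin].
    apply (locally_interval _ 0 (-1/2) p_infty); simpl; try lra.
    intros y Hy _. split; [apply vg_integrand_ge0 | apply vg_integrand_le_near0]; lra.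
  - apply continuous_ext_loc
      with (fun y => compensated_exp c y * (/ (eta * ln (y + 1)) * Rpower (y + 1) (q - 1))).
    + apply (locally_interval _ x 0 p_infty); simpl; try lra; auto.
      intros y Hy1 Hy2. unfold vg_integrand, vg_density.
      destruct (Rlt_dec y 0); [lra | reflexivity].
    + assert (0 < ln (x + 1)) by (apply ln_gt0; lra).
      apply (ex_derive_continuous (K := R_AbsRing) (V := R_NormedModule)).
      unfold compensated_exp, Rpower. auto_derive. repeat split; try lra. nra.
Qed.

Lemma ex_RInt_vg_integrand a b : -1 < a -> -1 < b -> ex_RInt F a b.
Proof.
  intros Ha Hb. apply (ex_RInt_continuous (V := R_CompleteNormedModule)).
  intros z [Hz _]. apply vg_integrand_continuous.
  apply Rlt_le_trans with (Rmin a b); auto. apply Rmin_glb_lt; auto.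
Qed.

Lemma RInt_vg_integrand_le a b : -1 < a -> a < b ->
  RInt F a b <= c * exp c / eta * (/ k + / - (q + 1)).
Proof.
  intros Ha Hab. generalize lin_coef_ge0. set (K := c * exp c / eta). intros HK.
  set (a' := Rmin a 0). set (b' := Rmax b 0).
  assert (Ha' : -1 < a' <= a /\ a' <= 0)
    by (unfold a', Rmin; destruct (Rle_dec a 0); lra).
  assert (Hb' : b <= b' /\ 0 <= b') by (unfold b', Rmax; destruct (Rle_dec b 0); lra).
  apply Rle_trans with (RInt F a' b').
  { apply RInt_ge0_subinterval; try lra.
    - apply ex_RInt_vg_integrand.
    - apply vg_integrand_ge0. }
  rewrite <- (RInt_Chasles F a' 0 b') by (apply ex_RInt_vg_integrand; lra).
  unfold plus; simpl.
  assert (H1 : RInt F a' 0 <= K * ((Rpower (0 + 1) (k - 1 + 1) - Rpower (a' + 1) (k - 1 + 1)) / (k - 1 + 1))).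
  { apply RInt_le_shifted_power; try lra; [apply ex_RInt_vg_integrand; lra |].
    intros x Hx. apply vg_integrand_le_lin_neg. lra. }
  assert (H2 : RInt F 0 b' <= K * ((Rpower (b' + 1) (q + 1) - Rpower (0 + 1) (q + 1)) / (q + 1))).
  { apply RInt_le_shifted_power; try lra; [apply ex_RInt_vg_integrand; lra |].
    intros x Hx. apply vg_integrand_le_lin_pos. lra. }
  replace (k - 1 + 1) with k in H1 by ring.
  rewrite Rplus_0_l, Rpower_base1 in H1, H2.
  assert (E1 : (1 - Rpower (a' + 1) k) / k <= / k).
  { unfold Rdiv. rewrite <- (Rmult_1_l (/ k)) at 2.
    apply Rmult_le_compat_r; [left; apply Rinv_0_lt_compat; lra |].
    generalize (Rpower_gt0 (a' + 1) k); lra. }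
  assert (E2 : (Rpower (b' + 1) (q + 1) - 1) / (q + 1) <= / - (q + 1)).
  { replace ((Rpower (b' + 1) (q + 1) - 1) / (q + 1))
      with ((1 - Rpower (b' + 1) (q + 1)) * / - (q + 1)) by (field; lra).
    rewrite <- (Rmult_1_l (/ - (q + 1))) at 2.
    apply Rmult_le_compat_r; [left; apply Rinv_0_lt_compat; lra |].
    generalize (Rpower_gt0 (b' + 1) (q + 1)); lra. }
  apply Rle_trans with (K * ((1 - Rpower (a' + 1) k) / k + (Rpower (b' + 1) (q + 1) - 1) / (q + 1)));
    [lra |].
  apply Rmult_le_compat_l; lra.
Qed.

Lemma RInt_vg_integrand_ge_tangent t0 w : 0 < t0 <= w -> w <= 1 ->
  exp 1 / eta * (exp c - 1 - c) * ((Rpower w (k + 1) - Rpower t0 (k + 1)) / (k + 1))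
  + exp 1 / eta * (c - c * exp c) * ((Rpower w (k + 2) - Rpower t0 (k + 2)) / (k + 2))
  <= RInt F (t0 - 1) (w - 1).
Proof.
  intros Ht0 Hw.
  generalize (RInt_ge_shifted_power2 F (exp 1 / eta * (exp c - 1 - c))
                (exp 1 / eta * (c - c * exp c)) k (t0 - 1) (w - 1) ltac:(lra) ltac:(lra)
                (ex_RInt_vg_integrand (t0 - 1) (w - 1) ltac:(lra) ltac:(lra))).
  replace (w - 1 + 1) with w by ring. replace (t0 - 1 + 1) with t0 by ring.
  intros Hint; apply Hint; clear Hint.
  intros x Hx. eapply Rle_trans; [| apply vg_integrand_ge_neg; lra].
  generalize (compensated_exp_ge_affine c (x + 1)). replace (x + 1 - 1) with x by ring.
  intros Hg. rewrite Rpower_add1 by lra.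
  replace (exp 1 / eta * (exp c - 1 - c) * Rpower (x + 1) k
           + exp 1 / eta * (c - c * exp c) * (Rpower (x + 1) k * (x + 1)))
    with (exp 1 / eta * (exp c * (1 - c * (x + 1)) - 1 - c + c * (x + 1)) * Rpower (x + 1) k)
    by ring.
  apply Rmult_le_compat_r; [left; apply Rpower_gt0 |].
  apply Rmult_le_compat_l; [apply Rdiv_le_0_compat; [left; apply exp_pos | lra] | exact Hg].
Qed.

Lemma RInt_vg_integrand_ge_affine w : 0 < w <= 1 ->
  exp 1 / eta * (-1 - c) * ((1 - Rpower w (k + 1)) / (k + 1))
  + exp 1 / eta * c * ((1 - Rpower w (k + 2)) / (k + 2)) <= RInt F (w - 1) 0.
Proof.
  intros Hw.
  generalize (RInt_ge_shifted_power2 F (exp 1 / eta * (-1 - c)) (exp 1 / eta * c) k (w - 1) 0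
                ltac:(lra) ltac:(lra) (ex_RInt_vg_integrand (w - 1) 0 ltac:(lra) ltac:(lra))).
  replace (w - 1 + 1) with w by ring. rewrite Rplus_0_l, !Rpower_base1.
  intros Hint; apply Hint; clear Hint.
  intros x Hx. eapply Rle_trans; [| apply vg_integrand_ge_neg; lra].
  rewrite Rpower_add1 by lra.
  replace (exp 1 / eta * (-1 - c) * Rpower (x + 1) k
           + exp 1 / eta * c * (Rpower (x + 1) k * (x + 1)))
    with (exp 1 / eta * (-1 + c * x) * Rpower (x + 1) k) by ring.
  apply Rmult_le_compat_r; [left; apply Rpower_gt0 |].
  apply Rmult_le_compat_l; [apply Rdiv_le_0_compat; [left; apply exp_pos | lra] |].
  generalize (compensated_exp_ge0 c x); nra.
Qed.

Lemma RInt_vg_integrand_ge w t0 : 0 < w <= 1 -> 0 < t0 < w ->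
  vg_lower_bound c k eta w - exp 1 / eta * (exp c - 1 - c) * t0 <= RInt F (t0 - 1) 0.
Proof.
  intros Hw Ht0.
  rewrite <- (RInt_Chasles F (t0 - 1) (w - 1) 0) by (apply ex_RInt_vg_integrand; lra).
  unfold plus; simpl.
  generalize (RInt_vg_integrand_ge_tangent t0 w ltac:(lra) ltac:(lra))
             (RInt_vg_integrand_ge_affine w Hw).
  set (e := exp 1 / eta). intros L1 L2.
  assert (He : 0 < e) by (apply Rdiv_lt_0_compat; [apply exp_pos | lra]).
  assert (Hec : 1 + c <= exp c) by apply exp_ineq1_le.
  assert (Hb1 : e * (c - c * exp c) * (Rpower t0 (k + 2) / (k + 2)) <= 0).
  { apply Rmult_le_0_r; [apply Rmult_le_0_l; [lra | nra] |].
    apply Rdiv_le_0_compat; [left; apply Rpower_gt0 | lra]. }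
  assert (Ht0k : Rpower t0 (k + 1) / (k + 1) <= t0).
  { apply Rle_trans with (Rpower t0 (k + 1)).
    - apply Rmult_le_reg_r with (k + 1); [lra |].
      unfold Rdiv. rewrite Rmult_assoc, Rinv_l by lra.
      generalize (Rpower_gt0 t0 (k + 1)); nra.
    - rewrite Rpower_add1 by lra.
      generalize (Rpower_le1 t0 k ltac:(lra) ltac:(lra)); nra. }
  assert (Ha1 : e * (exp c - 1 - c) * (Rpower t0 (k + 1) / (k + 1)) <= e * (exp c - 1 - c) * t0)
    by (apply Rmult_le_compat_l; [apply Rmult_le_pos |]; lra).
  assert (Hsum : vg_lower_bound c k eta w
    = e * (exp c - 1 - c) * ((Rpower w (k + 1) - Rpower t0 (k + 1)) / (k + 1))
      + e * (c - c * exp c) * ((Rpower w (k + 2) - Rpower t0 (k + 2)) / (k + 2))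
      + (e * (-1 - c) * ((1 - Rpower w (k + 1)) / (k + 1)) + e * c * ((1 - Rpower w (k + 2)) / (k + 2)))
      + e * (exp c - 1 - c) * (Rpower t0 (k + 1) / (k + 1))
      + e * (c - c * exp c) * (Rpower t0 (k + 2) / (k + 2)))
    by (unfold vg_lower_bound, e; field; lra).
  lra.
Qed.

Lemma vg_lower_bound_le w I : 0 < w <= 1 ->
  (forall a b, -1 < a -> a < b -> RInt F a b <= I) -> vg_lower_bound c k eta w <= I.
Proof.
  intros Hw HI. set (a1 := exp 1 / eta * (exp c - 1 - c)).
  assert (Ha1 : 0 <= a1).
  { apply Rmult_le_pos; [| generalize (exp_ineq1_le c); lra].
    apply Rdiv_le_0_compat; [left; apply exp_pos | lra]. }
  apply Rle_plus_epsilon. intros eps Heps.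
  set (t0 := Rmin (w / 2) (eps / (a1 + 1))).
  assert (Ht0 : 0 < t0 <= w / 2)
    by (split; [apply Rmin_glb_lt; [lra | apply Rdiv_lt_0_compat; lra] | apply Rmin_l]).
  assert (Ha1t0 : a1 * t0 <= eps).
  { assert (t0 * (a1 + 1) <= eps).
    { apply Rmult_le_reg_r with (/ (a1 + 1)); [apply Rinv_0_lt_compat; lra |].
      rewrite Rmult_assoc, Rinv_r, Rmult_1_r by lra. apply Rmin_r. }
    nra. }
  generalize (RInt_vg_integrand_ge w t0 Hw ltac:(lra)) (HI (t0 - 1) 0 ltac:(lra) ltac:(lra)).
  fold a1. lra.
Qed.
End VGIntegrand.

Lemma vg_lower_bound_inv c k eta : 0 < c -> -1 < k ->
  vg_lower_bound c k eta (/ c) =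
  exp 1 / eta * (Rpower (/ c) (k + 1) * exp c * (/ (k + 1) - / (k + 2))
                 + c / (k + 2) - (1 + c) / (k + 1)).
Proof.
  intros Hc Hk. unfold vg_lower_bound. f_equal.
  replace (k + 2) with (k + 1 + 1) by ring.
  rewrite (Rpower_add1 (/ c) (k + 1)) by (apply Rinv_0_lt_compat; lra).
  field. lra.
Qed.

Lemma min_inv_range At u : 0 < At -> 0 <= u -> 0 < min_inv At u <= 1.
Proof.
  intros HAt Hu. unfold min_inv. destruct (Req_EM_T u 0); [lra |].
  split; [apply Rmin_glb_lt; [apply Rinv_0_lt_compat; nra | lra] | apply Rmin_r].
Qed.

Lemma min_inv_large At u : 0 < At -> / At <= u -> min_inv At u = / (At * u).
Proof.
  intros HAt Hu. assert (Hu0 : 0 < u) by (generalize (Rinv_0_lt_compat At HAt); lra).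
  assert (H1 : 1 <= At * u).
  { apply Rmult_le_reg_r with (/ At); [apply Rinv_0_lt_compat; lra |].
    replace (At * u * / At) with u by (field; lra). lra. }
  unfold min_inv. destruct (Req_EM_T u 0); [lra |].
  apply Rmin_left. rewrite <- Rinv_1. apply Rinv_le_contravar; lra.
Qed.

Lemma VG_C_add_D_gt0 theta rho eta : 0 < rho -> 0 < eta ->
  0 < VG_C theta rho + VG_D theta rho eta.
Proof.
  intros Hrho Heta. unfold VG_C, VG_D.
  set (S := sqrt (theta ^ 2 + 2 * rho ^ 2 / eta)).
  assert (Hrad : 0 < 2 * rho ^ 2 / eta) by (apply Rdiv_lt_0_compat; nra).
  assert (HS : S * S = theta ^ 2 + 2 * rho ^ 2 / eta) by (apply sqrt_sqrt; nra).
  assert (0 <= S) by apply sqrt_pos.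
  replace (theta / rho ^ 2 + S / rho ^ 2) with ((theta + S) / rho ^ 2) by (field; lra).
  apply Rdiv_lt_0_compat; nra.
Qed.

Lemma kappa_hat_VG_lower_eq theta rho eta At u :
  kappa_hat_VG_lower theta rho eta At u =
  - At * m_tilde theta rho eta * u
  + vg_lower_bound (At * u) (VG_C theta rho + VG_D theta rho eta) eta (min_inv At u).
Proof. reflexivity. Qed.

Theorem mainTheorem16 (theta rho eta A s u : R)
  (Hrho : 0 < rho) (Heta : 0 < eta) (HA : 0 < A) (Hs : 0 < s)
  (HDC : VG_D theta rho eta - VG_C theta rho > 2) (Hu : 0 <= u) :
  let At := A * s in
  let C := VG_C theta rho in
  let D := VG_D theta rho eta in
  (/ At <= u ->
     kappa_hat_VG_lower theta rho eta At u =
     - At * m_tilde theta rho eta * u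
     + exp 1 / eta *
       ( Rpower (/ (At * u)) (C + D + 1) * exp (At * u)
           * (/ (C + D + 1) - / (C + D + 2))
         + At * u / (C + D + 2)
         - (1 + At * u) / (C + D + 1) )) /\
  exists K, kappa_hat_VG_is theta rho eta At u K /\
            K >= kappa_hat_VG_lower theta rho eta At u.
Proof.
  intros At C D.
  assert (HAt : 0 < At) by (apply Rmult_lt_0_compat; lra).
  assert (Hc : 0 <= At * u) by (apply Rmult_le_pos; lra).
  assert (Hk : 0 < VG_C theta rho + VG_D theta rho eta) by (apply VG_C_add_D_gt0; lra).
  assert (Hq : VG_C theta rho - VG_D theta rho eta < -1) by lra.
  rewrite kappa_hat_VG_lower_eq. split.
  - intros Hlarge.
    assert (Hc0 : 0 < At * u)
      by (apply Rmult_lt_0_compat; [lra | generalize (Rinv_0_lt_compat At HAt); lra]).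
    rewrite min_inv_large, vg_lower_bound_inv by lra. reflexivity.
  - destruct (improper_integral_m1_infty_sup (vg_integrand (At * u) (C + D) (C - D) eta)
                (ex_RInt_vg_integrand _ _ _ _ Hc Heta Hk Hq)
                (vg_integrand_ge0 _ _ _ _ Heta)
                _ (RInt_vg_integrand_le _ _ _ _ Hc Heta Hk Hq))
      as [I [HI Hsup]].
    exists (- At * m_tilde theta rho eta * u + I). split.
    + exists I. split; [rewrite kappa_hat_integrand_eq; exact HI | reflexivity].
    + apply Rle_ge, Rplus_le_compat_l.
      apply (vg_lower_bound_le _ _ _ _ Hc Heta Hk Hq); [apply min_inv_range; auto | exact Hsup].
Qed.
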